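(* Let $S$ be an infinite set, viewed as a structure $\mathcal{S}$ in the empty signature (only equality), and let $I$ be the set of nonempty finite subsets of $S$, ordered by inclusion, each viewed as a substructure. Then $\lim_I\mathrm{Th}(F^* )=\mathrm{Th}(\mathcal{S}^* )$, where $F$ ranges over $I$.
   Context: For a structure $\mathcal{T}$ with universe $T$, $\mathrm{Th}(\mathcal{T}^* )$ is the set of first-order sentences (in pure equality logic) with a constant for each element of $T$ that are true in $\mathcal{T}$; these are regarded as subsets of the set of sentences with constants from $S$. For a family $\{\Delta_i\}_{i\in I}$ indexed by a directed set: $\limsup_I \Delta_i=\{\theta: \forall i\ \exists j\ge i\ [\theta\in\Delta_j]\}$, $\liminf_I \Delta_i=\{\theta: \exists i\ \forall j\ge i\ [\theta\in\Delta_j]\}$, and $\lim_I\Delta_i=\Delta$ means both equal $\Delta$. *)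

From Stdlib Require Import List.
Import ListNotations.

Section FOL.
Variable S : Type.

Inductive term : Type :=
| tvar : nat -> term
| tconst : S -> term.

Inductive form : Type :=
| fEq : term -> term -> form
| fFalse : form
| fNot : form -> form
| fAnd : form -> form -> form
| fOr : form -> form -> form
| fImp : form -> form -> form
| fAll : nat -> form -> form
| fEx : nat -> form -> form.

Definition term_fv (t : term) : list nat :=
  match t with tvar n => [n] | tconst _ => [] end.

Fixpoint fv (f : form) : list nat :=
  match f with
  | fEq t u => term_fv t ++ term_fv u
  | fFalse => []
  | fNot g => fv g
  | fAnd g h | fOr g h | fImp g h => fv g ++ fv h
  | fAll n g | fEx n g => filter (fun m => negb (Nat.eqb m n)) (fv g)
  end.

Definition term_consts (t : term) : list S :=
  match t with tvar _ => [] | tconst c => [c] end.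

Fixpoint consts (f : form) : list S :=
  match f with
  | fEq t u => term_consts t ++ term_consts u
  | fFalse => []
  | fNot g => consts g
  | fAnd g h | fOr g h | fImp g h => consts g ++ consts h
  | fAll _ g | fEx _ g => consts g
  end.

Definition sentence (f : form) : Prop := fv f = [].

Definition upd (v : nat -> S) (n : nat) (a : S) : nat -> S :=
  fun m => if Nat.eqb m n then a else v m.

Definition teval (v : nat -> S) (t : term) : S :=
  match t with tvar n => v n | tconst c => c end.

Fixpoint sat (U : S -> Prop) (v : nat -> S) (f : form) : Prop :=
  match f with
  | fEq t u => teval v t = teval v u
  | fFalse => False
  | fNot g => ~ sat U v g
  | fAnd g h => sat U v g /\ sat U v h
  | fOr g h => sat U v g \/ sat U v h
  | fImp g h => sat U v g -> sat U v h
  | fAll n g => forall a, U a -> sat U (upd v n a) g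
  | fEx n g => exists a, U a /\ sat U (upd v n a) g
  end.

(* Th(U^* ): sentences whose constants name elements of U and which are
   true in the structure with universe U. *)
Definition Th (U : S -> Prop) (f : form) : Prop :=
  sentence f /\ (forall c, In c (consts f) -> U c) /\
  (forall v : nat -> S, (forall n, U (v n)) -> sat U v f).

End FOL.

Arguments tvar {S}. Arguments tconst {S}.
Arguments fFalse {S}.

Definition limsup {X A : Type} (inI : X -> Prop) (le : X -> X -> Prop)
  (D : X -> A -> Prop) (th : A) : Prop :=
  forall i, inI i -> exists j, inI j /\ le i j /\ D j th.

Definition liminf {X A : Type} (inI : X -> Prop) (le : X -> X -> Prop)
  (D : X -> A -> Prop) (th : A) : Prop :=
  exists i, inI i /\ forall j, inI j -> le i j -> D j th.

Definition is_lim {X A : Type} (inI : X -> Prop) (le : X -> X -> Prop)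
  (D : X -> A -> Prop) (L : A -> Prop) : Prop :=
  (forall th, limsup inI le D th <-> L th) /\
  (forall th, liminf inI le D th <-> L th).

Definition infinite_type (S : Type) : Prop :=
  ~ exists l : list S, forall x : S, In x l.

Definition finite_nonempty_subset {S : Type} (F : S -> Prop) : Prop :=
  (exists l : list S, forall x, F x <-> In x l) /\ (exists x, F x).

Definition subset_le {S : Type} (F G : S -> Prop) : Prop :=
  forall x, F x -> G x.

(* In the empty signature a structure is determined, up to isomorphism, by
   its cardinality.  A back-and-forth argument shows that a sentence with
   constants C and quantifier depth q has the same truth value in any two
   substructures that contain C and have at least |C| + q elements: each
   quantifier is answered either by copying an element already named
   (a constant or an earlier variable) or by a fresh one.  Once a finite
   F contains the constants of a sentence and enough further elements, the
   same holds for every larger F, so each Th(F^* ) agrees with Th(S^* ) on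
   that sentence eventually along the directed set I. *)

From Stdlib Require Import List Classical Lia Arith.
Import ListNotations.

Lemma quantifiers_transfer {A B : Type} (U : A -> Prop) (V : B -> Prop)
    (R : A -> B -> Prop) (P : A -> Prop) (Q : B -> Prop) :
  (forall a, U a -> exists b, V b /\ R a b) ->
  (forall b, V b -> exists a, U a /\ R a b) ->
  (forall a b, U a -> V b -> R a b -> (P a <-> Q b)) ->
  ((forall a, U a -> P a) <-> (forall b, V b -> Q b)) /\
  ((exists a, U a /\ P a) <-> (exists b, V b /\ Q b)).
Proof.
  intros forth back PQ; split; split.
  - intros HP b Vb. destruct (back b Vb) as [a [Ua Rab]].
    now apply (PQ a b), HP.
  - intros HQ a Ua. destruct (forth a Ua) as [b [Vb Rab]].
    now apply (PQ a b), HQ.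
  - intros [a [Ua Pa]]. destruct (forth a Ua) as [b [Vb Rab]].
    exists b. split; [exact Vb|]. now apply (PQ a b).
  - intros [b [Vb Qb]]. destruct (back b Vb) as [a [Ua Rab]].
    exists a. split; [exact Ua|]. now apply (PQ a b).
Qed.

Lemma is_lim_of_eventually {X A : Type} (inI : X -> Prop) (le : X -> X -> Prop)
    (D : X -> A -> Prop) (L : A -> Prop) :
  (forall i j, inI i -> inI j -> exists k, inI k /\ le i k /\ le j k) ->
  (forall th, exists i0, inI i0 /\ forall j, inI j -> le i0 j -> (D j th <-> L th)) ->
  is_lim inI le D L.
Proof.
  intros directed eventually; split; intro th;
    destruct (eventually th) as [i0 [Ii0 Hi0]]; split.
  - intros Hsup. destruct (Hsup i0 Ii0) as [j [Ij [i0j Dj]]].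
    now apply (Hi0 j).
  - intros Lth i Ii. destruct (directed i i0 Ii Ii0) as [k [Ik [ik i0k]]].
    exists k. split; [exact Ik|]. split; [exact ik|]. now apply (Hi0 k).
  - intros [i [Ii Hi]]. destruct (directed i i0 Ii Ii0) as [k [Ik [ik i0k]]].
    apply (Hi0 k); auto.
  - intros Lth. exists i0. split; [exact Ii0|]. intros j Ij i0j. now apply Hi0.
Qed.

Lemma finite_nonempty_subset_directed {S : Type} (F G : S -> Prop) :
  finite_nonempty_subset F -> finite_nonempty_subset G ->
  exists H, finite_nonempty_subset H /\ subset_le F H /\ subset_le G H.
Proof.
  intros [[lF HF] [x Fx]] [[lG HG] _].
  exists (fun y => In y (lF ++ lG)). split; [|split].
  - split; [now exists (lF ++ lG)|]. exists x. apply in_or_app. left. now apply HF.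
  - intros y Fy. apply in_or_app. left. now apply HF.
  - intros y Gy. apply in_or_app. right. now apply HG.
Qed.

Section EqualityLogic.
Variable S : Type.

Fixpoint qdepth (f : form S) : nat :=
  match f with
  | fEq _ _ _ | fFalse => 0
  | fNot _ g => qdepth g
  | fAnd _ g h | fOr _ g h | fImp _ g h => max (qdepth g) (qdepth h)
  | fAll _ _ g | fEx _ _ g => 1 + qdepth g
  end.

Definition card_ge (U : S -> Prop) (N : nat) : Prop :=
  forall L : list S, length L < N -> exists a, U a /\ ~ In a L.

Lemma card_ge_le U M N : N <= M -> card_ge U M -> card_ge U N.
Proof. intros NM HU L hL. apply HU. lia. Qed.

Lemma card_ge_of_NoDup U K :
  NoDup K -> (forall x, In x K -> U x) -> card_ge U (length K).
Proof.
  intros HK KU L hL.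
  destruct (classic (exists a, In a K /\ ~ In a L)) as [[a [Ka La]]|Hnone].
  - exists a. auto.
  - assert (KL : incl K L).
    { intros x Kx. apply NNPP. intro Lx. apply Hnone. eauto. }
    pose proof (NoDup_incl_length HK KL). lia.
Qed.

Lemma card_ge_full (HS : infinite_type S) N : card_ge (fun _ => True) N.
Proof.
  intros L _. apply NNPP. intro Hnone. apply HS. exists L.
  intro x. apply NNPP. intro Lx. apply Hnone. eauto.
Qed.

Lemma infinite_NoDup (HS : infinite_type S) n :
  exists K : list S, NoDup K /\ length K = n.
Proof.
  induction n as [|n [K [HK hK]]].
  - exists []. split; [constructor | reflexivity].
  - destruct (card_ge_full HS (1 + n) K ltac:(lia)) as [x [_ Kx]].
    exists (x :: K). split; [now constructor | simpl; lia].
Qed.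

Definition in_vocab (X : list nat) (C : list S) (t : term S) : Prop :=
  match t with tvar m => In m X | tconst c => In c C end.

(* [v] and [w] are related by a partial isomorphism between the elements
   named by the variables in [X] and the constants in [C]. *)
Definition same_eq_type (X : list nat) (C : list S) (v w : nat -> S) : Prop :=
  forall t u, in_vocab X C t -> in_vocab X C u ->
  (teval S v t = teval S v u <-> teval S w t = teval S w u).

Lemma same_eq_type_sym X C v w : same_eq_type X C v w -> same_eq_type X C w v.
Proof. intros H t u ht hu. symmetry. now apply H. Qed.

Lemma same_eq_type_nil C v w : same_eq_type [] C v w.
Proof. intros [m|c] [m'|c']; simpl; tauto. Qed.

Lemma in_vocab_cons n X C t :
  in_vocab (n :: X) C t -> t = tvar n \/ (t <> tvar n /\ in_vocab X C t).
Proof.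
  destruct t as [m|c]; simpl; [|intro Cc; right; split; [discriminate | exact Cc]].
  destruct (Nat.eq_dec m n) as [->|mn]; [now left|].
  intros [->|Xm]; [contradiction|]. right. split; [congruence | exact Xm].
Qed.

Lemma teval_upd_self v n a : teval S (upd S v n a) (tvar n) = a.
Proof. simpl. unfold upd. now rewrite Nat.eqb_refl. Qed.

Lemma teval_upd_other v n a t : t <> tvar n -> teval S (upd S v n a) t = teval S v t.
Proof.
  destruct t as [m|c]; simpl; [|reflexivity].
  intro mn. unfold upd. destruct (Nat.eqb_spec m n); congruence.
Qed.

Lemma upd_into (U : S -> Prop) v n a :
  (forall m, U (v m)) -> U a -> forall m, U (upd S v n a m).
Proof. intros Uv Ua m. unfold upd. now destruct (m =? n). Qed.

Lemma teval_in_vocab (U : S -> Prop) X C w t :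
  (forall m, U (w m)) -> (forall c, In c C -> U c) -> in_vocab X C t ->
  U (teval S w t).
Proof. destruct t; simpl; auto. Qed.

Lemma teval_in_image X C w t :
  in_vocab X C t -> In (teval S w t) (map w X ++ C).
Proof.
  destruct t; simpl; intro h; apply in_or_app; [left; now apply in_map | now right].
Qed.

Lemma same_eq_type_upd X C v w n a b :
  same_eq_type X C v w ->
  (forall u, in_vocab X C u -> u <> tvar n -> (a = teval S v u <-> b = teval S w u)) ->
  same_eq_type (n :: X) C (upd S v n a) (upd S w n b).
Proof.
  intros H Hab t u ht hu.
  destruct (in_vocab_cons _ _ _ _ ht) as [->|[tn ht']],
           (in_vocab_cons _ _ _ _ hu) as [->|[un hu']];
    rewrite ?teval_upd_self, ?teval_upd_other by assumption.
  - tauto.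
  - now apply Hab.
  - specialize (Hab t ht' tn).
    split; intro E; symmetry; apply Hab; symmetry; exact E.
  - now apply H.
Qed.

Lemma same_eq_type_extend (V : S -> Prop) N X C v w n a :
  card_ge V N -> length X + length C < N ->
  (forall m, V (w m)) -> (forall c, In c C -> V c) ->
  same_eq_type X C v w ->
  exists b, V b /\ same_eq_type (n :: X) C (upd S v n a) (upd S w n b).
Proof.
  intros HV hlen Vw VC H.
  destruct (classic (exists u, in_vocab X C u /\ u <> tvar n /\ a = teval S v u))
    as [[u0 [hu0 [_ ->]]] | Hfresh].
  - exists (teval S w u0). split; [now apply (teval_in_vocab V X C)|].
    apply same_eq_type_upd; [exact H|]. intros u hu _. now apply H.
  - destruct (HV (map w X ++ C)) as [b [Vb hb]];
      [rewrite length_app, length_map; lia|].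
    exists b. split; [exact Vb|]. apply same_eq_type_upd; [exact H|].
    intros u hu un. split; intro E; exfalso.
    + apply Hfresh. exists u. auto.
    + apply hb. rewrite E. now apply teval_in_image.
Qed.

Lemma incl_fv_binder n g X :
  incl (filter (fun m => negb (Nat.eqb m n)) (fv S g)) X -> incl (fv S g) (n :: X).
Proof.
  intros H x hx. destruct (Nat.eqb_spec x n) as [->|xn]; [now left|].
  right. apply H, filter_In. split; [exact hx|]. now apply Nat.eqb_neq in xn as ->.
Qed.

Section Transfer.
Variables (U V : S -> Prop) (N : nat) (C : list S).
Hypotheses (HU : card_ge U N) (HV : card_ge V N).
Hypotheses (CU : forall c, In c C -> U c) (CV : forall c, In c C -> V c).

Lemma same_eq_type_back_and_forth X v w n :
  (forall m, U (v m)) -> (forall m, V (w m)) -> same_eq_type X C v w ->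
  length X + length C < N ->
  (forall a, U a -> exists b, V b /\
     same_eq_type (n :: X) C (upd S v n a) (upd S w n b)) /\
  (forall b, V b -> exists a, U a /\
     same_eq_type (n :: X) C (upd S v n a) (upd S w n b)).
Proof.
  intros Uv Vw H hlen. split.
  - intros a _. now apply (same_eq_type_extend V N).
  - intros b _.
    destruct (same_eq_type_extend U N X C w v n b HU hlen Uv CU
                (same_eq_type_sym _ _ _ _ H)) as [a [Ua Hab]].
    exists a. split; [exact Ua | now apply same_eq_type_sym].
Qed.

(* Each quantifier may consume one fresh element, hence the budget [N]. *)
Lemma sat_transfer f : forall X v w,
  (forall m, U (v m)) -> (forall m, V (w m)) -> same_eq_type X C v w ->
  incl (fv S f) X -> incl (consts S f) C -> length X + length C + qdepth f <= N ->
  (sat S U v f <-> sat S V w f).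
Proof.
  induction f as [t u| |g IH|g IHg h IHh|g IHg h IHh|g IHg h IHh|n g IH|n g IH];
    intros X v w Uv Vw H hfv hc hl; simpl in *.
  4-6: apply incl_app_inv in hfv as [fvg fvh]; apply incl_app_inv in hc as [cg ch];
    rewrite (IHg X v w), (IHh X v w) by (auto; lia); tauto.
  4-5: apply incl_fv_binder in hfv;
    destruct (same_eq_type_back_and_forth X v w n Uv Vw H ltac:(lia)) as [forth back];
    assert (step : forall a b, U a -> V b ->
              same_eq_type (n :: X) C (upd S v n a) (upd S w n b) ->
              (sat S U (upd S v n a) g <-> sat S V (upd S w n b) g))
      by (intros a b Ua Vb Hab; apply (IH (n :: X));
          solve [apply upd_into; auto | assumption | simpl; lia]);
    destruct (quantifiers_transfer U V _ _ _ forth back step); assumption.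
  - apply H; [destruct t | destruct u]; simpl in *;
      [apply hfv | apply hc | apply hfv | apply hc]; auto with datatypes.
  - tauto.
  - rewrite (IH X v w) by auto. tauto.
Qed.

End Transfer.

Lemma Th_iff_Th_full (HS : infinite_type S) (U : S -> Prop) th :
  (exists x, U x) -> (forall c, In c (consts S th) -> U c) ->
  card_ge U (length (consts S th) + qdepth th) ->
  (Th S U th <-> Th S (fun _ => True) th).
Proof.
  intros [x0 Ux0] CU HU.
  assert (transfer : sentence S th -> forall v w, (forall m, U (v m)) ->
            (sat S U v th <-> sat S (fun _ => True) w th)).
  { intros Hs v w Uv.
    apply (sat_transfer U (fun _ => True) _ (consts S th) HU (card_ge_full HS _) CU
             (fun _ _ => I) th []); auto using same_eq_type_nil, incl_refl.
    unfold sentence in Hs. rewrite Hs. apply incl_refl. }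
  unfold Th. split; intros (Hs & _ & Hsat); split; auto; split; auto.
  - intros w _. apply (transfer Hs (fun _ => x0)); auto.
  - intros v Uv. apply (transfer Hs v v); auto.
Qed.

Lemma Th_eventually_Th_full (HS : infinite_type S) th :
  exists i, finite_nonempty_subset i /\
    forall j, finite_nonempty_subset j -> subset_le i j ->
      (Th S j th <-> Th S (fun _ => True) th).
Proof.
  set (bound := length (consts S th) + qdepth th).
  destruct (infinite_NoDup HS (1 + bound)) as [[|x0 K] [HK hK]]; [discriminate|].
  exists (fun x => In x (consts S th ++ x0 :: K)). split.
  - split; [now exists (consts S th ++ x0 :: K)|].
    exists x0. apply in_or_app. right. now left.
  - intros j [_ Jne] ij. apply Th_iff_Th_full; auto.
    + intros c hc. apply ij, in_or_app. now left.
    + apply (card_ge_le _ (1 + bound)); [lia|]. rewrite <- hK.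
      apply card_ge_of_NoDup; [exact HK|]. intros x hx. apply ij, in_or_app. now right.
Qed.

End EqualityLogic.

Theorem mainTheorem10 (S : Type) (HS : infinite_type S) :
  is_lim (@finite_nonempty_subset S) (@subset_le S)
    (fun F => Th S F) (Th S (fun _ => True)).
Proof.
  apply is_lim_of_eventually.
  - intros i j Ii Ij. now apply finite_nonempty_subset_directed.
  - intro th. now apply Th_eventually_Th_full.
Qed.
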